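(* Fix $d\geq 1$. Let ${\boldsymbol{\rho}}=(\rho_1,\dots,\rho_m)$ and ${\boldsymbol{\tau}}=(\tau_1,\dots,\tau_n)$ be contraction vectors (in ${\mathbb R}^d$), and assume that ${\boldsymbol{\rho}}$ is equivalent to ${\boldsymbol{\tau}}$. Then ${\mathcal D}({\boldsymbol{\rho}})\sim{\mathcal D}({\boldsymbol{\tau}})$, i.e. every set $E\in{\mathcal D}({\boldsymbol{\rho}})$ and every set $F\in{\mathcal D}({\boldsymbol{\tau}})$ are Lipschitz equivalent.
   Context: Two compact sets $E,F\subset{\mathbb R}^d$ are Lipschitz equivalent if there is a bijection $f:E\to F$ and a constant $C>0$ with $C^{-1}|x-y|\le|f(x)-f(y)|\le C|x-y|$ for all $x,y\in E$. A contraction vector is ${\boldsymbol{\rho}}=(\rho_1,\dots,\rho_m)$ with each $\rho_j\in(0,1)$ and $\sum_{j=1}^m\rho_j^d<1$. ${\mathcal D}({\boldsymbol{\rho}})$ denotes the set of all dust-like self-similar sets in ${\mathbb R}^d$ that are attractors of some iterated function system $\{\phi_1,\dots,\phi_m\}$ of contracting similarities on ${\mathbb R}^d$, $\phi_j$ having ratio $\rho_j$; dust-like means the sets $\phi_j(K)$, $j=1,\dots,m$, are pairwise disjoint, where $K$ is the attractor (the unique nonempty compact set with $K=\bigcup_j\phi_j(K)$). It is known that any two sets in ${\mathcal D}({\boldsymbol{\rho}})$ are Lipschitz equivalent, and ${\mathcal D}({\boldsymbol{\rho}})\sim{\mathcal D}({\boldsymbol{\tau}})$ means that sets of the two classes are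 Lipschitz equivalent. Let $\Sigma_m$ be the set of infinite words over $\{1,\dots,m\}$ and $\Sigma_m^*$ the set of nonempty finite words; for ${\mathbf i}\in\Sigma_m^*$, $[{\mathbf i}]$ is the set of infinite words beginning with ${\mathbf i}$. A finite set $\{{\mathbf j}_1,\dots,{\mathbf j}_n\}\subset\Sigma_m^*$ is a cut set if the cylinders $[{\mathbf j}_1],\dots,[{\mathbf j}_n]$ are pairwise disjoint with union $\Sigma_m$. For ${\mathbf i}=i_1\cdots i_k$ write ${\boldsymbol{\rho}}_{\mathbf i}=\rho_{i_1}\cdots\rho_{i_k}$. The contraction vector ${\boldsymbol{\tau}}=(\tau_1,\dots,\tau_n)$ is derived from ${\boldsymbol{\rho}}$ if there is a cut set $\{{\mathbf j}_1,\dots,{\mathbf j}_n\}$ of $\Sigma_m$ with ${\boldsymbol{\tau}}=({\boldsymbol{\rho}}_{{\mathbf j}_1},\dots,{\boldsymbol{\rho}}_{{\mathbf j}_n})$. Two contraction vectors ${\boldsymbol{\rho}},{\boldsymbol{\tau}}$ are equivalent if there is a finite sequence ${\boldsymbol{\rho}}={\boldsymbol{\rho}}_1,{\boldsymbol{\rho}}_2,\dots,{\boldsymbol{\rho}}_N={\boldsymbol{\tau}}$ of contraction vectors such that for each $1\le j<N$, ${\boldsymbol{\rho}}_{j+1}$ is derived from ${\boldsymbol{\rho}}_j$ or ${\boldsymbol{\rho}}_j$ is derived from ${\boldsymbol{\rho}}_{j+1}$. *)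

From HB Require Import structures.
From mathcomp Require Import all_boot all_order all_algebra.
From mathcomp Require Import all_classical all_reals all_analysis.
From Stdlib Require Import Relations.
Set Implicit Arguments. Unset Strict Implicit. Unset Printing Implicit Defensive.
Import Order.TTheory GRing.Theory Num.Theory.
Import numFieldNormedType.Exports.
Local Open Scope classical_set_scope.
Local Open Scope ring_scope.

(* Points of R^d are row vectors 'rV[R]_d; the topology (used for compactness)
   is the standard one of mathcomp-analysis; metric notions (similarity,
   Lipschitz) use the Euclidean distance below. *)
Definition edist {R : realType} {d : nat} (x y : 'rV[R]_d) : R :=
  Num.sqrt (\sum_(i < d) (x ord0 i - y ord0 i) ^+ 2).

Definition contraction_vector {R : realType} (d : nat) (rho : seq R) : Prop :=
  (0 < size rho)%N /\ (forall x, x \in rho -> 0 < x < 1) /\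
  \sum_(x <- rho) x ^+ d < 1.

(* finite words over {0,..,m-1} as seq nat; infinite words as nat -> nat
   with values < m.  w belongs to the cylinder [i] iff i is a prefix of w. *)
Definition in_cylinder (i : seq nat) (w : nat -> nat) : Prop :=
  forall k, (k < size i)%N -> nth 0%N i k = w k.

Definition cut_set (m : nat) (J : seq (seq nat)) : Prop :=
  (forall j, j \in J -> (0 < size j)%N /\ (forall a, a \in j -> (a < m)%N)) /\
  (forall w : nat -> nat, (forall k, (w k < m)%N) ->
     exists! k : nat, (k < size J)%N /\ in_cylinder (nth [::] J k) w).

Definition word_prod {R : realType} (rho : seq R) (i : seq nat) : R :=
  \prod_(a <- i) rho`_a.

Definition derived {R : realType} (rho tau : seq R) : Prop :=
  exists J, cut_set (size rho) J /\ tau = map (word_prod rho) J.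

Definition derived_step {R : realType} (d : nat) (a b : seq R) : Prop :=
  contraction_vector d a /\ contraction_vector d b /\ derived a b.

Definition cv_equiv {R : realType} (d : nat) (rho tau : seq R) : Prop :=
  clos_refl_sym_trans (seq R) (derived_step d) rho tau.

Definition similarity {R : realType} {d : nat} (phi : 'rV[R]_d -> 'rV[R]_d)
  (r : R) : Prop := forall x y, edist (phi x) (phi y) = r * edist x y.

(* K belongs to D(rho): K is the attractor (nonempty compact with
   K = U_j phi_j(K)) of an IFS of similarities with ratios rho_j, and is
   dust-like. *)
Definition in_D {R : realType} {d : nat} (rho : seq R) (K : set 'rV[R]_d) : Prop :=
  exists phi : nat -> ('rV[R]_d -> 'rV[R]_d),
    (forall j, (j < size rho)%N -> similarity (phi j) rho`_j) /\
    K !=set0 /\ compact K /\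
    K = \bigcup_(j in [set j | (j < size rho)%N]) (phi j @` K) /\
    (forall j k, (j < size rho)%N -> (k < size rho)%N -> j <> k ->
       phi j @` K `&` phi k @` K = set0).

Definition lip_equiv {R : realType} {d : nat} (E F : set 'rV[R]_d) : Prop :=
  exists f : 'rV[R]_d -> 'rV[R]_d,
    (forall x, E x -> F (f x)) /\
    (forall x y, E x -> E y -> f x = f y -> x = y) /\
    (forall y, F y -> exists2 x, E x & f x = y) /\
    exists2 C : R, 0 < C &
      forall x y, E x -> E y ->
        C^-1 * edist x y <= edist (f x) (f y) /\
        edist (f x) (f y) <= C * edist x y.

From Pilot Require Import Defs.
From HB Require Import structures.
From mathcomp Require Import all_boot all_order all_algebra.
From mathcomp Require Import all_classical all_reals all_analysis.
From Stdlib Require Import Relations.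
Set Implicit Arguments. Unset Strict Implicit. Unset Printing Implicit Defensive.
Import Order.TTheory GRing.Theory Num.Theory.
Import numFieldNormedType.Exports.
Local Open Scope classical_set_scope.
Local Open Scope ring_scope.

(** A dust-like attractor [E] of an IFS with ratios [rho] is bi-Lipschitz
   equivalent to the space of infinite words over [{0, .., m-1}] with the
   ultrametric [rho_(u 0) * .. * rho_(u (n-1))], where [n] is the first index at
   which two words differ: a word [u] is coded by the single point of the
   nested compact sets [phi_(u 0) o .. o phi_(u (n-1)) (E)], the diameter of
   these sets gives the upper bound, and the positive gap between the disjoint
   pieces [phi_j (E)] gives the lower bound.  If [tau] is derived from [rho]
   through a cut set [J], cutting a [rho]-word into consecutive blocks of [J]
   is a bijection onto [tau]-words which distorts the ultrametric by a bounded
   factor, because the words of [J] have bounded length.  Bi-Lipschitz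
   equivalence being an equivalence relation, it propagates along the chain of
   derivations joining [rho] to [tau]. *)

(* [edist] would otherwise resolve to the extended distance of mathcomp-analysis. *)
Local Notation edist := Defs.edist.

Section BiLipschitz.
Variable R : numFieldType.

Definition within_factor (C x y : R) := C^-1 * x <= y <= C * x.

Lemma within_factor_refl (x : R) : within_factor 1 x x.
Proof. by rewrite /within_factor invr1 !mul1r lexx. Qed.

Lemma within_factor0 (C : R) : within_factor C 0 0.
Proof. by rewrite /within_factor !mulr0 lexx. Qed.

Lemma within_factor_sym (C x y : R) :
  0 < C -> within_factor C x y -> within_factor C y x.
Proof.
move=> C0 /andP[lo up]; apply/andP; split; first by rewrite ler_pdivrMl.
by rewrite -ler_pdivrMl.
Qed.

Lemma within_factor_trans (C D x y z : R) : 0 < C -> 0 < D ->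
  within_factor C x y -> within_factor D y z -> within_factor (C * D) x z.
Proof.
move=> C0 D0 /andP[lo1 up1] /andP[lo2 up2]; apply/andP; split.
- rewrite invfM mulrAC mulrC; apply: le_trans lo2.
  by apply: ler_wpM2l => //; rewrite invr_ge0 ltW.
- apply: (le_trans up2); rewrite [C * D]mulrC -mulrA.
  exact: ler_wpM2l (ltW D0) _ _ up1.
Qed.

Lemma within_factor_eq0 (C x : R) : 0 < C -> within_factor C x 0 -> x = 0.
Proof.
move=> C0 /andP[]; rewrite pmulr_rle0 ?invr_gt0 // pmulr_rge0 // => x_le0 x_ge0.
by apply/eqP; rewrite eq_le x_le0 x_ge0.
Qed.

Lemma within_factor_bounds (c1 c2 x y : R) : 0 < c1 -> 0 < c2 -> 0 <= x ->
  c1 * x <= y -> y <= c2 * x -> within_factor (c1^-1 + c2) x y.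
Proof.
move=> c1_gt0 c2_gt0 x_ge0 lo up; apply/andP; split.
- apply: le_trans lo; apply: ler_wpM2r => //.
  have c1V_gt0 : 0 < c1^-1 by rewrite invr_gt0.
  by rewrite -[leRHS]invrK lef_pV2 ?posrE ?addr_gt0 // lerDl ltW.
- by apply: (le_trans up); apply: ler_wpM2r => //; rewrite lerDr invr_ge0 ltW.
Qed.

Definition bilipschitz_onto {A B : Type} (P : set A) (Q : set B)
    (dA : A -> A -> R) (dB : B -> B -> R) (f : A -> B) :=
  f @` P = Q /\ exists2 C, 0 < C &
    forall x y, P x -> P y -> within_factor C (dA x y) (dB (f x) (f y)).

Definition bilipschitz_equiv {A B : Type} (P : set A) (Q : set B)
    (dA : A -> A -> R) (dB : B -> B -> R) :=
  exists f, bilipschitz_onto P Q dA dB f.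

Lemma bilipschitz_equiv_refl {A : Type} (P : set A) dA :
  bilipschitz_equiv P P dA dA.
Proof.
exists id; split; first exact: image_id.
by exists 1 => // x y _ _; exact: within_factor_refl.
Qed.

Lemma bilipschitz_equiv_trans {A B T : Type} (P : set A) (Q : set B) (S : set T)
    dA dB dT :
  bilipschitz_equiv P Q dA dB -> bilipschitz_equiv Q S dB dT ->
  bilipschitz_equiv P S dA dT.
Proof.
move=> [f [fPQ [C C0 fC]]] [g [gQS [D D0 gD]]].
have fQ x : P x -> Q (f x) by move=> Px; rewrite -fPQ; exact: imageP.
exists (g \o f); split; first by rewrite -image_comp fPQ.
exists (C * D); first exact: mulr_gt0.
move=> x y Px Py.
by apply: within_factor_trans (fC _ _ Px Py) (gD _ _ (fQ _ Px) (fQ _ Py)).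
Qed.

Lemma bilipschitz_equiv_sym {A : pointedType} {B : Type} (P : set A) (Q : set B)
    dA dB :
  (forall x y, P x -> P y -> dA x y = 0 -> x = y) -> (forall y, dB y y = 0) ->
  bilipschitz_equiv P Q dA dB -> bilipschitz_equiv Q P dB dA.
Proof.
move=> dA_sep dB0 [f [fPQ [C C0 fC]]].
have f_inj : {in P &, injective f}.
  move=> x y /set_mem Px /set_mem Py fxy; apply: dA_sep => //.
  by apply: within_factor_eq0 C0 _; rewrite -(dB0 (f x)) {2}fxy; exact: fC.
exists (pinv P f); split; first by rewrite -fPQ injpinv_image.
exists C => // y y'; rewrite -fPQ => -[x Px <-] [x' Px' <-].
by rewrite !pinvKV ?inE //; exact: within_factor_sym (fC _ _ Px Px').
Qed.

End BiLipschitz.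

Section Words.
Variable R : realFieldType.
Implicit Types (a : seq R) (u v : nat -> nat).

Definition word (m : nat) : set (nat -> nat) := [set u | forall k, (u k < m)%N].

Definition agree u v n := forall k, (k < n)%N -> u k = v k.

Definition shift_word u p : nat -> nat := fun k => u (p + k)%N.

Definition prefix_ratio a u n : R := \prod_(0 <= k < n) a`_(u k).

Definition word_dist a u v : R :=
  if pselect (exists n, u n != v n) is left ex then prefix_ratio a u (ex_minn ex)
  else 0.

Lemma word_shift m u p : word m u -> word m (shift_word u p).
Proof. by move=> wu k; exact: wu. Qed.

Lemma first_difference u v : u <> v -> exists n, agree u v n /\ u n <> v n.
Proof.
move=> uv; have ex : exists n, u n != v n.
  apply: contrapT => nex; apply: uv; apply: funext => k; apply/eqP.
  by apply: contrapT => /negP ukv; apply: nex; exists k.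
exists (ex_minn ex); case: ex_minnP => n /eqP unv n_min; split=> // k kn.
by apply/eqP; apply: contraTT kn => /n_min; rewrite -leqNgt.
Qed.

Lemma word_distxx a u : word_dist a u u = 0.
Proof.
rewrite /word_dist; case: pselect => // ex; exfalso.
by have [n] := ex; rewrite eqxx.
Qed.

Lemma word_distE a u v n : agree u v n -> u n <> v n ->
  word_dist a u v = prefix_ratio a u n.
Proof.
move=> uv unv; rewrite /word_dist; case: pselect => [ex|]; last first.
  by case; exists n; apply/eqP.
case: ex_minnP => m /eqP umv m_min; congr prefix_ratio.
apply/eqP; rewrite eqn_leq m_min /=; last exact/eqP.
by rewrite leqNgt; apply/negP => /uv.
Qed.

Lemma prefix_ratio0 a u : prefix_ratio a u 0 = 1.
Proof. by rewrite /prefix_ratio big_geq. Qed.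

Lemma prefix_ratioS a u n : prefix_ratio a u n.+1 = prefix_ratio a u n * a`_(u n).
Proof. by rewrite /prefix_ratio big_nat_recr. Qed.

Lemma prefix_ratioD a u p q :
  prefix_ratio a u (p + q) = prefix_ratio a u p * prefix_ratio a (shift_word u p) q.
Proof.
elim: q => [|q IH]; first by rewrite addn0 prefix_ratio0 mulr1.
by rewrite addnS !prefix_ratioS IH mulrA.
Qed.

Lemma prefix_ratio_gt0 a u n : {in a, forall x, 0 < x} -> word (size a) u ->
  0 < prefix_ratio a u n.
Proof. by move=> a_gt0 wu; apply: prodr_gt0 => k _; apply: a_gt0; exact: mem_nth. Qed.

Lemma prefix_ratio_bounds a u s r n : 0 <= s -> {in a, forall x, s <= x <= r} ->
  word (size a) u -> s ^+ n <= prefix_ratio a u n <= r ^+ n.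
Proof.
move=> s_ge0 a_sr wu; elim: n => [|n /andP[lo hi]].
  by rewrite prefix_ratio0 !expr0 lexx.
have /andP[sx xr] := a_sr _ (mem_nth 0 (wu n)).
rewrite prefix_ratioS !exprSr; apply/andP; split.
  by apply: ler_pM => //; exact: exprn_ge0.
apply: ler_pM => //; first exact: le_trans (exprn_ge0 n s_ge0) lo.
exact: le_trans sx.
Qed.

Lemma word_dist_eq0 a u v : {in a, forall x, 0 < x} -> word (size a) u ->
  word_dist a u v = 0 -> u = v.
Proof.
move=> a_gt0 wu uv0; apply: contrapT => /first_difference [n [uv unv]].
by have := prefix_ratio_gt0 n a_gt0 wu; rewrite -(word_distE a uv unv) uv0 ltxx.
Qed.

Lemma ratio_bounds a : {in a, forall x, 0 < x < 1} ->
  exists s r, [/\ 0 < s, s <= r, r < 1 & {in a, forall x, s <= x <= r}].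
Proof.
elim: a => [|x a IH] a01.
  by exists 2^-1, 2^-1; split; rewrite ?invr_gt0 ?invf_lt1 ?ltr1n.
have [|s [r [s_gt0 sr r1 a_sr]]] := IH.
  by move=> y ya; apply: a01; rewrite inE ya orbT.
have /andP[x_gt0 x1] := a01 x (mem_head x a).
exists (Num.min x s), (Num.max x r); split.
- by rewrite lt_min x_gt0 s_gt0.
- by rewrite ge_min le_max lexx.
- by rewrite gt_max x1 r1.
move=> y; rewrite inE => /predU1P[->|ya]; first by rewrite ge_min le_max !lexx.
by have /andP[sy yr] := a_sr y ya; rewrite ge_min le_max sy yr !orbT.
Qed.

Definition symbolic_equiv (a b : seq R) :=
  bilipschitz_equiv (word (size a)) (word (size b)) (word_dist a) (word_dist b).

Lemma symbolic_equiv_sym a b : {in a, forall x, 0 < x} ->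
  symbolic_equiv a b -> symbolic_equiv b a.
Proof.
move=> a_gt0; apply: bilipschitz_equiv_sym => [u v wu _|u].
- exact: word_dist_eq0.
- exact: word_distxx.
Qed.

End Words.

Lemma increasing_bracket (f : nat -> nat) : f 0%N = 0%N ->
  (forall t, (f t < f t.+1)%N) -> forall n, exists t, (f t <= n < f t.+1)%N.
Proof.
move=> f0 f_incr; elim=> [|n [t /andP[tn nt]]].
  by exists 0%N; rewrite f0 /=; have := f_incr 0%N; rewrite f0.
case: (ltngtP n.+1 (f t.+1)) => [n1t|n1t|n1t].
- by exists t; rewrite n1t (leq_trans tn).
- by move: n1t; rewrite ltnS leqNgt nt.
- by exists t.+1; rewrite n1t leqnn f_incr.
Qed.

Section CutSetBlocks.
Variables (R : realType) (a : seq R) (J : seq (seq nat)).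
Hypothesis cutJ : cut_set (size a) J.
Implicit Types (u v : nat -> nat).

Definition cut_cylinders u : set nat :=
  [set k | (k < size J)%N /\ in_cylinder (nth [::] J k) u].

Definition cut_index u : nat := xget 0%N (cut_cylinders u).

Lemma cut_indexP u : word (size a) u -> cut_cylinders u (cut_index u).
Proof. by move=> wu; have [k [kJ _]] := cutJ.2 u wu; exact: xgetI kJ. Qed.

Lemma cut_index_eq u k : word (size a) u -> (k < size J)%N ->
  in_cylinder (nth [::] J k) u -> cut_index u = k.
Proof.
move=> wu kJ uk; have [k' [_ k'_uniq]] := cutJ.2 u wu.
apply: xget_unique => [|k'' k''P]; first by split.
by rewrite -(k'_uniq _ k''P) (k'_uniq _ (conj kJ uk)).
Qed.

Lemma cut_block_gt0 k : (k < size J)%N -> (0 < size (nth [::] J k))%N.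
Proof. by move=> kJ; have [] := cutJ.1 _ (mem_nth [::] kJ). Qed.

(* A word [u] is cut into consecutive words of [J]: the [t]-th one is
   [nth [::] J (block_code u t)] and starts at position [block_start u t]. *)
Fixpoint block_start u t : nat :=
  if t is t'.+1 then
    let s := block_start u t' in
    (s + size (nth [::] J (cut_index (shift_word u s))))%N
  else 0.

Definition block_code u t : nat := cut_index (shift_word u (block_start u t)).

Lemma block_startS u t :
  block_start u t.+1 = (block_start u t + size (nth [::] J (block_code u t)))%N.
Proof. by []. Qed.

Lemma block_code_word u : word (size a) u -> word (size J) (block_code u).
Proof. by move=> wu t; exact: (cut_indexP (word_shift _ wu)).1. Qed.

Lemma block_code_cyl u t : word (size a) u ->
  in_cylinder (nth [::] J (block_code u t)) (shift_word u (block_start u t)).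
Proof. by move=> wu; exact: (cut_indexP (word_shift _ wu)).2. Qed.

Lemma block_start_lt u t : word (size a) u -> (block_start u t < block_start u t.+1)%N.
Proof.
by move=> wu; rewrite block_startS -[X in (X < _)%N]addn0 ltn_add2l cut_block_gt0 //;
  exact: block_code_word.
Qed.

Definition concat_blocks v t : seq nat :=
  flatten [seq nth [::] J (v s) | s <- iota 0 t].

Definition decode_blocks v k : nat := nth 0%N (concat_blocks v k.+1) k.

Lemma concat_blocksS v t :
  concat_blocks v t.+1 = concat_blocks v t ++ nth [::] J (v t).
Proof. by rewrite /concat_blocks -addn1 iotaD map_cat flatten_cat /= cats0. Qed.

Lemma size_concat_blocks v t : word (size J) v -> (t <= size (concat_blocks v t))%N.
Proof.
move=> wv; elim: t => [//|t IH]; rewrite concat_blocksS size_cat -addn1.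
by rewrite leq_add // cut_block_gt0.
Qed.

Lemma concat_blocks_prefix v t t' : (t <= t')%N ->
  exists r, concat_blocks v t' = concat_blocks v t ++ r.
Proof.
move=> tt'; exists (flatten [seq nth [::] J (v s) | s <- iota t (t' - t)]).
by rewrite /concat_blocks -{1}(subnKC tt') iotaD map_cat flatten_cat.
Qed.

Lemma decode_blocksE v t k : word (size J) v ->
  (k < size (concat_blocks v t))%N -> decode_blocks v k = nth 0%N (concat_blocks v t) k.
Proof.
move=> wv kt; rewrite /decode_blocks; case: (leqP t k.+1) => tk.
- by have [r ->] := concat_blocks_prefix v tk; rewrite nth_cat kt.
- have [r ->] := concat_blocks_prefix v (ltnW tk).
  by rewrite nth_cat (leq_trans _ (size_concat_blocks k.+1 wv)).
Qed.

Lemma decode_blocks_word v : word (size J) v -> word (size a) (decode_blocks v).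
Proof.
move=> wv k; have := mem_nth 0%N (size_concat_blocks k.+1 wv).
case/flattenP => _ /mapP[s _ ->]; exact: (cutJ.1 _ (mem_nth [::] (wv s))).2.
Qed.

Lemma block_code_decode v t : word (size J) v ->
  block_start (decode_blocks v) t = size (concat_blocks v t) /\
  block_code (decode_blocks v) t = v t.
Proof.
move=> wv.
have code_t t' : block_start (decode_blocks v) t' = size (concat_blocks v t') ->
    block_code (decode_blocks v) t' = v t'.
  move=> st; rewrite /block_code st; apply: cut_index_eq => //.
    exact/word_shift/decode_blocks_word.
  move=> k k_lt; rewrite /shift_word (@decode_blocksE _ t'.+1) //.
    by rewrite concat_blocksS nth_cat ltnNge leq_addr /= addKn.
  by rewrite concat_blocksS size_cat ltn_add2l.
elim: t => [|t [st ct]]; first by split => //; exact: code_t.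
have st' : block_start (decode_blocks v) t.+1 = size (concat_blocks v t.+1).
  by rewrite block_startS ct st concat_blocksS size_cat.
by split => //; exact: code_t.
Qed.

Lemma block_code_onto : block_code @` word (size a) = word (size J).
Proof.
apply/seteqP; split=> [_ [u wu <-]|v wv]; first exact: block_code_word.
exists (decode_blocks v); first exact: decode_blocks_word.
by apply: funext => t; have [] := block_code_decode t wv.
Qed.

Lemma block_step u v t : word (size a) u -> word (size a) v ->
  block_start u t = block_start v t -> agree u v (block_start u t.+1) ->
  block_code u t = block_code v t /\ block_start u t.+1 = block_start v t.+1.
Proof.
move=> wu wv st uv.
have ct : block_code v t = block_code u t.
  rewrite /block_code -st; apply: cut_index_eq; first exact: word_shift.
    exact: (cut_indexP (word_shift _ wu)).1.
  move=> k k_lt; rewrite (block_code_cyl (t := t) wu k_lt) /shift_word uv //.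
  by rewrite block_startS ltn_add2l.
by split => //; rewrite !block_startS ct st.
Qed.

Lemma agree_blocks u v n t : word (size a) u -> word (size a) v ->
  agree u v n -> (block_start u t <= n)%N ->
  block_start u t = block_start v t /\ agree (block_code u) (block_code v) t.
Proof.
move=> wu wv uv; elim: t => [|t IH] tn; first by [].
have [st ag] := IH (leq_trans (ltnW (block_start_lt t wu)) tn).
have [ct st'] := block_step wu wv st (fun k kt => uv k (leq_trans kt tn)).
split=> // k; rewrite ltnS leq_eqVlt => /predU1P[->//|kt]; exact: ag.
Qed.

Lemma block_code_first_difference u v n t : word (size a) u -> word (size a) v ->
  agree u v n -> u n <> v n -> (block_start u t <= n < block_start u t.+1)%N ->
  agree (block_code u) (block_code v) t /\ block_code u t <> block_code v t.
Proof.
move=> wu wv uv unv /andP[tn nt]; have [st ag] := agree_blocks wu wv uv tn.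
split=> // ct; apply: unv.
have k_lt : (n - block_start u t < size (nth [::] J (block_code u t)))%N.
  by rewrite ltn_subLR // -block_startS.
have := block_code_cyl (t := t) wu k_lt; have := block_code_cyl (t := t) wv.
by rewrite -ct -st => /(_ _ k_lt); rewrite /shift_word subnKC // => <- <-.
Qed.

Lemma prefix_ratio_blocks u t : word (size a) u ->
  prefix_ratio (map (word_prod a) J) (block_code u) t =
  prefix_ratio a u (block_start u t).
Proof.
move=> wu; elim: t => [|t IH]; first by rewrite !prefix_ratio0.
rewrite prefix_ratioS IH block_startS prefix_ratioD; congr (_ * _).
rewrite (nth_map [::]); last exact: block_code_word.
rewrite /word_prod /prefix_ratio (big_nth 0%N); apply: eq_big_nat => k /andP[_ k_lt].
by rewrite (block_code_cyl (t := t) wu k_lt).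
Qed.

Lemma prefix_ratio_in_block s L u n t : 0 <= s -> s <= 1 ->
  {in a, forall x, s <= x <= 1} -> (forall j, j \in J -> (size j <= L)%N) ->
  word (size a) u -> (block_start u t <= n < block_start u t.+1)%N ->
  s ^+ L * prefix_ratio a u (block_start u t) <= prefix_ratio a u n <=
    prefix_ratio a u (block_start u t).
Proof.
move=> s_ge0 s1 a_s1 JL wu /andP[tn nt].
have nL : (n - block_start u t <= L)%N.
  rewrite leq_subLR (leq_trans (ltnW nt)) // block_startS leq_add2l JL //.
  exact/mem_nth/block_code_word.
have /andP[p_lo p_hi] := prefix_ratio_bounds (block_start u t) s_ge0 a_s1 wu.
have /andP[q_lo q_hi] := prefix_ratio_bounds (n - block_start u t) s_ge0 a_s1
  (word_shift (block_start u t) wu).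
have p_ge0 := le_trans (exprn_ge0 _ s_ge0) p_lo.
rewrite -(subnKC tn) prefix_ratioD; apply/andP; split.
  rewrite mulrC ler_wpM2l //; apply: le_trans q_lo; exact: ler_wiXn2l.
by rewrite ler_piMr //; apply: (le_trans q_hi); rewrite expr1n.
Qed.

Lemma block_code_bilipschitz : {in a, forall x, 0 < x < 1} ->
  bilipschitz_onto (word (size a)) (word (size J))
    (word_dist a) (word_dist (map (word_prod a) J)) block_code.
Proof.
move=> a01; split; first exact: block_code_onto.
have [s [r [s_gt0 sr r1 a_sr]]] := ratio_bounds a01.
have s_ge0 := ltW s_gt0; have s1 : s <= 1 := ltW (le_lt_trans sr r1).
have a_s1 : {in a, forall x, s <= x <= 1}.
  by move=> x /a_sr /andP[sx xr]; rewrite sx ltW // (le_lt_trans xr r1).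
pose L := \max_(j <- J) size j.
have JL j : j \in J -> (size j <= L)%N by move=> jJ; exact: leq_bigmax_seq.
have sL_gt0 : 0 < s ^+ L by exact: exprn_gt0.
exists (s ^+ L)^-1; first by rewrite invr_gt0.
move=> u v wu wv; case: (pselect (u = v)) => [<-|/first_difference [n [uv unv]]].
  by rewrite !word_distxx; exact: within_factor0.
have [t tn] := increasing_bracket (erefl : block_start u 0 = 0%N)
  (fun t => block_start_lt t wu) n.
have [uv_code unv_code] := block_code_first_difference wu wv uv unv tn.
rewrite (word_distE _ uv unv) (word_distE _ uv_code unv_code) prefix_ratio_blocks //.
have /andP[lo hi] := prefix_ratio_in_block s_ge0 s1 a_s1 JL wu tn.
have a_gt0 : {in a, forall x, 0 < x} by move=> x /a01 /andP[].
have n_ge0 : 0 <= prefix_ratio a u n by exact: ltW (prefix_ratio_gt0 n a_gt0 wu).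
rewrite /within_factor; apply/andP; split; last by rewrite ler_pdivlMl.
by rewrite invrK (le_trans _ hi) // ler_piMl // exprn_ile1.
Qed.

End CutSetBlocks.

Lemma derived_symbolic_equiv (R : realType) (a b : seq R) :
  {in a, forall x, 0 < x < 1} -> derived a b -> symbolic_equiv a b.
Proof.
move=> a01 [J [cutJ ->]]; rewrite /symbolic_equiv size_map.
by exists (block_code J); exact: block_code_bilipschitz.
Qed.

Lemma cv_equiv_symbolic_equiv (R : realType) (d : nat) (a b : seq R) :
  cv_equiv d a b -> symbolic_equiv a b.
Proof.
(* Symmetry needs positive ratios, so we walk the chain step by step: the
   ratios of both ends of a derivation step are in (0, 1). *)
move=> ab; elim: (clos_rst_rst1n _ _ _ _ ab) => [x|x y z [xy|yx] _ yz].
- exact: bilipschitz_equiv_refl.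
- have [[_ [x01 _]] [_ x_y]] := xy.
  exact: bilipschitz_equiv_trans (derived_symbolic_equiv x01 x_y) yz.
- have [[_ [y01 _]] [_ y_x]] := yx.
  apply: bilipschitz_equiv_trans yz; apply: symbolic_equiv_sym.
    by move=> c /y01 /andP[].
  exact: derived_symbolic_equiv y01 y_x.
Qed.

Section Euclidean.
Variables (R : realType) (d : nat).
Implicit Types x y : 'rV[R]_d.

Lemma edist_ge0 x y : 0 <= edist x y.
Proof. exact: sqrtr_ge0. Qed.

Lemma edistxx x : edist x x = 0.
Proof. by rewrite /edist big1 ?sqrtr0 // => i _; rewrite subrr expr0n. Qed.

Lemma norm_le_edist x y : `|x - y| <= edist x y.
Proof.
rewrite [leLHS]mx_normrE; apply: bigmax_le => [|[i j] _]; first exact: edist_ge0.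
rewrite /= !mxE (ord1 i) /edist -sqrtr_sqr; apply: ler_wsqrtr.
rewrite (bigD1 j) //= -[leLHS]addr0 lerD2l sumr_ge0 // => k _; exact: sqr_ge0.
Qed.

Lemma edist_le_norm x y : edist x y <= d%:R * `|x - y|.
Proof.
have dn_ge0 : 0 <= d%:R * `|x - y| by rewrite mulr_ge0.
rewrite /edist -(ger0_norm dn_ge0) -sqrtr_sqr; apply: ler_wsqrtr.
apply: (@le_trans _ _ (\sum_(i < d) `|x - y| ^+ 2)).
  apply: ler_sum => i _; rewrite -real_normK ?num_real // lerXn2r ?nnegrE //.
  rewrite [leRHS]mx_normrE; apply: le_trans (le_bigmax _ _ (ord0, i)).
  by rewrite /= !mxE.
rewrite sumr_const card_ord -[_ *+ d]mulr_natl exprMn.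
apply: ler_wpM2r; first exact: sqr_ge0.
by case: d => [|n]; rewrite ?expr0n // expr2 ler_peMr // ler1n.
Qed.

Lemma edist_eq0 x y : edist x y = 0 -> x = y.
Proof.
move=> xy0; apply/eqP; rewrite -subr_eq0 -normr_eq0 eq_le normr_ge0 andbT -xy0.
exact: norm_le_edist.
Qed.

Lemma similarity_continuous (f : 'rV[R]_d -> 'rV[R]_d) r :
  similarity f r -> continuous f.
Proof.
move=> f_sim x; apply/(@cvgrPdist_lt _ _ _ _ (nbhs_filter x)) => e e_gt0.
have k_gt0 : 0 < (`|r| + 1) * (d%:R + 1) by rewrite mulr_gt0 // ltr_wpDl.
near=> y; apply: (le_lt_trans (norm_le_edist _ _)); rewrite f_sim.
apply: (@le_lt_trans _ _ ((`|r| + 1) * (d%:R + 1) * `|x - y|)).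
  rewrite -mulrA; apply: (le_trans (ler_norm _)); rewrite normrM.
  apply: ler_pM => //; first by rewrite lerDl.
  rewrite ger0_norm ?edist_ge0 //; apply: (le_trans (edist_le_norm _ _)).
  by apply: ler_wpM2r => //; rewrite lerDl.
rewrite -ltr_pdivlMl //; near: y.
by apply: cvgr_dist_lt => //; rewrite mulr_gt0 ?invr_gt0.
Unshelve. all: by end_near. Qed.

Lemma bilipschitz_equiv_lip_equiv (E F : set 'rV[R]_d) :
  bilipschitz_equiv E F edist edist -> lip_equiv E F.
Proof.
move=> [f [fEF [C C_gt0 fC]]]; exists f; split; [|split; [|split]].
- by move=> x Ex; rewrite -fEF; exact: imageP.
- move=> x y Ex Ey fxy; apply: edist_eq0; apply: (within_factor_eq0 C_gt0).
  by rewrite -(edistxx (f x)) {2}fxy; exact: fC.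
- by rewrite -fEF => _ [x Ex <-]; exists x.
by exists C => // x y Ex Ey; apply/andP; exact: fC.
Qed.

End Euclidean.

Lemma compact_disjoint_gap {R : realType} {V : normedModType R} (A B : set V) :
  compact A -> compact B -> A `&` B = set0 ->
  exists2 e : R, 0 < e & forall x y, A x -> B y -> e <= `|x - y|.
Proof.
move=> cA cB AB0.
have clB : closed B := compact_closed (@norm_hausdorff _ _) cB.
have : \forall e \near (0 : R)^'+, A `<=` [set x | forall y, B y -> e < `|x - y|].
  apply: ((compact_near_coveringP A).1 cA R (0 : R)^'+
    (fun e x => forall y, B y -> e < `|x - y|)) => x Ax.
  have : nbhs x (~` B).
    rewrite -openC in clB; apply: open_nbhs_nbhs; split=> // Bx.
    by have : (A `&` B) x by []; rewrite AB0.
  move=> /nbhs_ballP [r /= r_gt0 rB].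
  exists (ball x (r / 2), [set e | e < r / 2]).
    split; first by apply/nbhs_ballP; exists (r / 2) => //; exact: divr_gt0.
    by apply: nbhs_right_lt; exact: divr_gt0.
  move=> [x' e] /= [xx' er] y By.
  have ry : r <= `|x - y|.
    by rewrite leNgt; apply/negP => xy; apply: (rB y) => //; rewrite -ball_normE.
  move: xx'; rewrite -ball_normE /= => xx'.
  apply: (lt_le_trans er); rewrite -(lerD2r (r / 2)) -splitr.
  apply: (le_trans ry); have -> : x - y = (x - x') + (x' - y) by rewrite addrA subrK.
  by apply: (le_trans (ler_normD _ _)); rewrite addrC lerD2l ltW.
move=> /(filterI (nbhs_right_gt (0 : R)))/filter_ex [e [e_gt0 Ae]].
by exists e => // x y Ax By; exact: ltW (Ae x Ax y By).
Qed.

Lemma common_positive_bound {R : realDomainType} {I : eqType} (P : I -> R -> Prop)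
    (s : seq I) :
  (forall i e e', 0 < e' <= e -> P i e -> P i e') ->
  {in s, forall i, exists2 e, 0 < e & P i e} ->
  exists2 e, 0 < e & {in s, forall i, P i e}.
Proof.
move=> P_mono; elim: s => [|i s IH] sP; first by exists 1.
have [|e e_gt0 Pe] := IH; first by move=> j js; apply: sP; rewrite inE js orbT.
have [e' e'_gt0 Pe'] := sP i (mem_head i s).
exists (Num.min e e'); first by rewrite lt_min e_gt0 e'_gt0.
move=> j; rewrite inE => /predU1P[->|js].
  by apply: P_mono Pe'; rewrite lt_min e_gt0 e'_gt0 ge_min lexx orbT.
by apply: P_mono (Pe j js); rewrite lt_min e_gt0 e'_gt0 ge_min lexx.
Qed.

Lemma nested_compact_meets {T : ptopologicalType} (K : nat -> set T) :
  compact (K 0%N) -> (forall n, closed (K n)) -> (forall n, K n !=set0) ->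
  (forall n, K n.+1 `<=` K n) -> \bigcap_n K n !=set0.
Proof.
move=> K0_compact K_closed K_ne0 K_nested.
have K_mono : {homo K : m n / (m <= n)%N >-> n `<=` m}.
  apply: homo_leq => [A|B A C AB BC|//]; first exact: subset_refl.
  exact: subset_trans BC AB.
move: K0_compact; rewrite compact_In0 => /(_ nat setT K); apply.
  by exists K => // n _; rewrite setIidr //; exact: K_mono.
move=> D _; have [x Kx] := K_ne0 (\max_(i <- finmap.enum_fset D) i).
by exists x => i /= iD; apply: K_mono Kx; exact: leq_bigmax_seq.
Qed.

Lemma le0_geometric {R : realType} (x M r : R) : `|r| < 1 ->
  (forall n, x <= M * r ^+ n) -> x <= 0.
Proof.
move=> r1 x_le; rewrite -(mulr0 M).
have Mr0 : (fun n => M * r ^+ n) @ \oo --> M * 0.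
  by apply: cvgM; [exact: cvg_cst|exact: cvg_expr].
by apply: cvgr_to_ge Mr0 _; exact: nearW.
Qed.

Section Attractor.
Variables (R : realType) (d : nat) (a : seq R) (E : set 'rV[R]_d)
  (phi : nat -> 'rV[R]_d -> 'rV[R]_d).
Hypotheses (a01 : {in a, forall x, 0 < x < 1})
  (phi_sim : forall j, (j < size a)%N -> similarity (phi j) a`_j)
  (E_ne0 : E !=set0) (E_compact : compact E)
  (E_pieces : E = \bigcup_(j in [set j | (j < size a)%N]) (phi j @` E))
  (E_dust : forall j k, (j < size a)%N -> (k < size a)%N -> j <> k ->
     phi j @` E `&` phi k @` E = set0).
Implicit Types (u v : nat -> nat).

Let a_gt0 : {in a, forall x, 0 < x}.
Proof. by move=> x /a01 /andP[]. Qed.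

Lemma phi_in j x : (j < size a)%N -> E x -> E (phi j x).
Proof. by move=> ja Ex; rewrite E_pieces; exists j => //; exists x. Qed.

(* [ifs_comp u n] is [phi (u 0) \o .. \o phi (u n.-1)]. *)
Fixpoint ifs_comp u n x : 'rV[R]_d :=
  if n is n'.+1 then ifs_comp u n' (phi (u n') x) else x.

Lemma ifs_comp_similarity u n : word (size a) u ->
  similarity (ifs_comp u n) (prefix_ratio a u n).
Proof.
move=> wu; elim: n => [|n IH] x y /=; first by rewrite prefix_ratio0 mul1r.
by rewrite IH (phi_sim (wu n)) prefix_ratioS mulrA.
Qed.

Lemma ifs_comp_agree u v n x : agree u v n -> ifs_comp u n x = ifs_comp v n x.
Proof.
elim: n x => [//|n IH] x uv /=.
by rewrite (uv n (ltnSn n)) IH // => k kn; apply: uv; exact: ltnW.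
Qed.

Lemma E_diam_bounded : exists2 M : R, 0 < M &
  forall x y, E x -> E y -> edist x y <= M.
Proof.
have [M0 [_ M0E]] := compact_bounded E_compact.
have E_le x : E x -> `|x| <= `|M0| + 1.
  by move=> Ex; apply: M0E => //; rewrite (le_lt_trans (ler_norm _)) // ltrDl.
exists (d%:R * (2 * (`|M0| + 1)) + 1); first by rewrite ltr_wpDl // !mulr_ge0.
move=> x y Ex Ey; apply: (le_trans (edist_le_norm _ _)); apply: ler_wpDr => //.
apply: ler_wpM2l => //; apply: (le_trans (ler_normB _ _)).
by rewrite mulr2n mulrDl mul1r lerD // E_le.
Qed.

Lemma pieces_gap : exists2 del : R, 0 < del &
  forall j k x y, (j < size a)%N -> (k < size a)%N -> j <> k -> E x -> E y ->
    del <= edist (phi j x) (phi k y).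
Proof.
pose P (jk : nat * nat) e :=
  jk.1 <> jk.2 -> forall x y, E x -> E y -> e <= edist (phi jk.1 x) (phi jk.2 y).
pose pairs := [seq (j, k) | j <- iota 0 (size a), k <- iota 0 (size a)].
have [del del_gt0 Pdel] : exists2 e, 0 < e & {in pairs, forall jk, P jk e}.
  apply: common_positive_bound => [jk e e' /andP[_ e'e] Pe jk_ne x y Ex Ey|].
    exact: le_trans e'e (Pe jk_ne x y Ex Ey).
  move=> ? /allpairsP[[j k] /= [+ + ->]]; rewrite !mem_iota /= => ja ka.
  have piece_compact i : (i < size a)%N -> compact (phi i @` E).
    move=> ia; apply: continuous_compact E_compact.
    exact/continuous_subspaceT/similarity_continuous/phi_sim.
  case: (pselect (j = k)) => [-> | jk]; first by exists 1 => // ? [].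
  have [e e_gt0 e_le] := compact_disjoint_gap (piece_compact j ja) (piece_compact k ka)
    (E_dust ja ka jk).
  exists e => // _ x y Ex Ey; apply: le_trans (norm_le_edist _ _).
  by apply: e_le; [exists x | exists y].
exists del => // j k x y ja ka jk Ex Ey; apply: (Pdel (j, k)) => //.
by apply/allpairsP; exists (j, k); rewrite !mem_iota.
Qed.

Definition coding u : 'rV[R]_d := xget 0 (\bigcap_n (ifs_comp u n @` E)).

Lemma coding_in_pieces u n : word (size a) u -> (ifs_comp u n @` E) (coding u).
Proof.
move=> wu; suff K_ne0 : \bigcap_n (ifs_comp u n @` E) !=set0.
  by rewrite /coding; apply: (xgetPex 0 K_ne0).
apply: nested_compact_meets => [|n'|n'|n'].
- by rewrite (_ : ifs_comp u 0 = id) ?image_id.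
- apply: compact_closed; first exact: norm_hausdorff.
  apply: continuous_compact E_compact; apply: continuous_subspaceT.
  exact/similarity_continuous/ifs_comp_similarity.
- by have [x Ex] := E_ne0; exists (ifs_comp u n' x), x.
- by move=> _ [x Ex <-]; exists (phi (u n') x) => //; exact: phi_in.
Qed.

Lemma coding_dist_le M u v n : (forall x y, E x -> E y -> edist x y <= M) ->
  word (size a) u -> word (size a) v -> agree u v n ->
  edist (coding u) (coding v) <= M * prefix_ratio a u n.
Proof.
move=> EM wu wv uv.
have [z Ez <-] := coding_in_pieces n wu; have [z' Ez' <-] := coding_in_pieces n wv.
rewrite -(ifs_comp_agree z' uv) ifs_comp_similarity // mulrC.
by apply: ler_wpM2r; [exact: ltW (prefix_ratio_gt0 n a_gt0 wu) | exact: EM].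
Qed.

Lemma coding_dist_ge del u v n :
  (forall j k x y, (j < size a)%N -> (k < size a)%N -> j <> k -> E x -> E y ->
     del <= edist (phi j x) (phi k y)) ->
  word (size a) u -> word (size a) v -> agree u v n -> u n <> v n ->
  del * prefix_ratio a u n <= edist (coding u) (coding v).
Proof.
move=> E_gap wu wv uv unv.
have [z Ez <-] := coding_in_pieces n.+1 wu.
have [z' Ez' <-] := coding_in_pieces n.+1 wv.
rewrite /= -(ifs_comp_agree (phi (v n) z') uv) ifs_comp_similarity // mulrC.
by apply: ler_wpM2l; [exact: ltW (prefix_ratio_gt0 n a_gt0 wu) | exact: E_gap].
Qed.

Definition preimages y : set (nat * 'rV[R]_d) :=
  [set jz | [/\ (jz.1 < size a)%N, E jz.2 & phi jz.1 jz.2 = y]].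

Definition ifs_preimage y : nat * 'rV[R]_d := xget (0%N, y) (preimages y).

Lemma ifs_preimageP y : E y -> preimages y (ifs_preimage y).
Proof. by rewrite {1}E_pieces => -[j ja [z Ez zy]]; apply: (@xgetI _ _ _ (j, z)). Qed.

Fixpoint address_point x k : 'rV[R]_d :=
  if k is k'.+1 then (ifs_preimage (address_point x k')).2 else x.

Definition address x k : nat := (ifs_preimage (address_point x k)).1.

Lemma address_pointP x k : E x ->
  E (address_point x k) /\ ifs_comp (address x) k (address_point x k) = x.
Proof.
move=> Ex; elim: k => [//|k [Ek IH]]; have [ja Ez jz] := ifs_preimageP Ek.
by split=> //=; move: jz; rewrite -/(address x k) => ->.
Qed.

Lemma address_word x : E x -> word (size a) (address x).
Proof.
by move=> Ex k; have [Ek _] := address_pointP k Ex; have [] := ifs_preimageP Ek.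
Qed.

Lemma coding_unique u x : word (size a) u -> (forall n, (ifs_comp u n @` E) x) ->
  coding u = x.
Proof.
move=> wu x_in; have [M M_gt0 EM] := E_diam_bounded.
have [s [r [s_gt0 sr r1 a_sr]]] := ratio_bounds a01.
apply: edist_eq0; apply/eqP; rewrite eq_le edist_ge0 andbT.
apply: (@le0_geometric _ _ M r); first by rewrite ger0_norm // (le_trans (ltW s_gt0)).
move=> n; have [z Ez <-] := coding_in_pieces n wu; have [z' Ez' <-] := x_in n.
rewrite ifs_comp_similarity // mulrC; apply: ler_pM.
- exact: edist_ge0.
- exact: ltW (prefix_ratio_gt0 n a_gt0 wu).
- exact: EM.
- by have /andP[] := prefix_ratio_bounds n (ltW s_gt0) a_sr wu.
Qed.

Lemma coding_onto : coding @` word (size a) = E.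
Proof.
apply/seteqP; split=> [_ [u wu <-]|x Ex].
  by have [z Ez <-] := coding_in_pieces 0 wu.
exists (address x); first exact: address_word.
apply: coding_unique => [|n]; first exact: address_word.
by have [Ek xk] := address_pointP n Ex; exists (address_point x n).
Qed.

Lemma coding_bilipschitz :
  bilipschitz_onto (word (size a)) E (word_dist a) edist coding.
Proof.
split; first exact: coding_onto.
have [M M_gt0 EM] := E_diam_bounded; have [del del_gt0 E_gap] := pieces_gap.
exists (del^-1 + M); first by rewrite addr_gt0 ?invr_gt0.
move=> u v wu wv; case: (pselect (u = v)) => [<-|/first_difference [n [uv unv]]].
  by rewrite word_distxx edistxx; exact: within_factor0.
rewrite (word_distE _ uv unv); apply: within_factor_bounds => //.
- exact: ltW (prefix_ratio_gt0 n a_gt0 wu).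
- exact: coding_dist_ge.
- exact: coding_dist_le.
Qed.

End Attractor.

Lemma attractor_symbolic (R : realType) (d : nat) (a : seq R) (E : set 'rV[R]_d) :
  {in a, forall x, 0 < x < 1} -> in_D a E ->
  bilipschitz_equiv (word (size a)) E (word_dist a) edist.
Proof.
move=> a01 [phi [phi_sim [E_ne0 [E_compact [E_pieces E_dust]]]]].
exists (coding E phi).
exact: (coding_bilipschitz a01 phi_sim E_ne0 E_compact E_pieces E_dust).
Qed.

Unset Implicit Arguments.
Set Strict Implicit.

Theorem proposition1p3 (R : realType) (d : nat) (hd : (1 <= d)%N)
  (rho tau : seq R) :
  contraction_vector d rho -> contraction_vector d tau ->
  cv_equiv d rho tau ->
  forall (E F : set 'rV[R]_d), in_D rho E -> in_D tau F -> lip_equiv E F.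
Proof.
move=> [_ [rho01 _]] [_ [tau01 _]] /cv_equiv_symbolic_equiv rho_tau E F
  /(attractor_symbolic rho01) rhoE /(attractor_symbolic tau01) tauF.
have rho_gt0 : {in rho, forall x, 0 < x} by move=> x /rho01 /andP[].
apply: bilipschitz_equiv_lip_equiv; apply: (bilipschitz_equiv_trans _ tauF).
apply: (bilipschitz_equiv_trans _ rho_tau).
apply: bilipschitz_equiv_sym rhoE => [u v wu _|]; [exact: word_dist_eq0|exact: edistxx].
Qed.
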